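(* Let $(H,\theta)$ be a strengthened arity. For every $\omega$-cocontinuous monad $R=(R,\mu,\eta)$ on ${\mathsf{Set}}$ and every $\omega$-cocontinuous $R$-module $(M,\rho^M)$, define $\rho^{H(M)}\colon H(M)\cdot R\to H(M)$ by $\rho^{H(M)}:=H(\rho^M)\circ\theta_{M,(R,\eta)}$. Then $(H(M),\rho^{H(M)})$ is an $R$-module, and this construction (sending a morphism $(f,m)\colon(R,M)\to(S,N)$ of $\mathrm{BMod}^\omega$ to $(f,H(m))$) upgrades $H$ into a module transformer, i.e., an endofunctor $\hat H$ of $\mathrm{BMod}^\omega$ commuting with the forgetful functor $\mathrm{BMod}^\omega\to\mathrm{Mon}^\omega$.
   Context: Conventions: for endofunctors $F,G$ of ${\mathsf{Set}}$, $F\cdot G$ denotes $F\circ G$; whiskering is written $F\alpha$, $\alpha F$. An endofunctor is $\omega$-cocontinuous if it preserves colimits of $\omega$-chains; $\mathrm{End}^\omega({\mathsf{Set}})$ is the category of such endofunctors. $\mathrm{End}^\omega_*({\mathsf{Set}})$ is the category of pointed $\omega$-cocontinuous endofunctors $(F,e)$, $e\colon I\to F$ a natural transformation from the identity functor $I$; morphisms $f\colon(F_1,e_1)\to(F_2,e_2)$ satisfy $f\circ e_1=e_2$. Pointed endofunctors compose as $(Z_1,e_1)\cdot(Z_2,e_2)=(Z_1\cdot Z_2,e_1\cdot e_2)$ with $e_1\cdot e_2$ the horizontal composite. A strengthened arity is a pair $(H,\theta)$ where $H$ is an $\omega$-cocontinuous endofunctor of $\mathrm{End}^\omega({\mathsf{Set}})$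 and $\theta$ is a natural transformation with components $\theta_{X,(Z,e)}\colon H(X)\cdot Z\to H(X\cdot Z)$, natural in $X\in\mathrm{End}^\omega({\mathsf{Set}})$ and $(Z,e)\in\mathrm{End}^\omega_*({\mathsf{Set}})$, such that $\theta_{X,(I,1_I)}=1_{H(X)}$ and $\theta_{X,(Z_1\cdot Z_2,e_1\cdot e_2)}=\theta_{X\cdot Z_1,(Z_2,e_2)}\circ(\theta_{X,(Z_1,e_1)}Z_2)$ for all $X,(Z_1,e_1),(Z_2,e_2)$. Modules: for a monad $R=(R,\mu,\eta)$ on ${\mathsf{Set}}$, an $R$-module is a functor $M\colon{\mathsf{Set}}\to{\mathsf{Set}}$ with $\rho^M\colon M\cdot R\to M$ satisfying $\rho^M\circ\rho^MR=\rho^M\circ M\mu$ and $\rho^M\circ M\eta=1_M$; module morphisms are natural transformations commuting with actions. For a monad morphism $f\colon R\to S$ and $S$-module $N$, $f^*N$ is $N$ with $R$-action $\rho^N\circ Nf$. $\mathrm{Mon}^\omega$ is the category of monads on ${\mathsf{Set}}$ with $\omega$-cocontinuous underlying functor. $\mathrm{BMod}^\omega$ has objects $(R,M)$, $R\in\mathrm{Mon}^\omega$, $M$ an $\omega$-cocontinuous $R$-module, and morphisms $(f,m)\colon(R,M)\to(S,N)$ with $f$ a monad morphism and $m\colon M\to f^*N$ an $R$-module morphism. *)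

(* The category Set is modelled by a universe
   [Type]; endofunctors of Set are records of object map + morphism map,
   natural transformations are families of functions. *)
From Stdlib Require Import FunctionalExtensionality.

Set Primitive Projections.

Record FData : Type := mkF {
  fob :> Type -> Type;
  fmap : forall A B : Type, (A -> B) -> fob A -> fob B }.
Arguments fmap _ {A B} _ _.

Definition is_functor (F : FData) : Prop :=
  (forall A (x : F A), fmap F (fun a : A => a) x = x) /\
  (forall A B C (f : A -> B) (g : B -> C) (x : F A),
      fmap F (fun a => g (f a)) x = fmap F g (fmap F f x)).

Definition Fcomp (F G : FData) : FData :=
  mkF (fun A => F (G A)) (fun A B f => fmap F (fmap G f)).
Definition Fid : FData := mkF (fun A => A) (fun A B f => f).

Record chain : Type := mkChain {
  ch_ob : nat -> Type;
  ch_map : forall n, ch_ob n -> ch_ob (S n) }.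

Definition is_cocone (c : chain) (L : Type) (inj : forall n, ch_ob c n -> L) : Prop :=
  forall n x, inj (S n) (ch_map c n x) = inj n x.

Definition is_colimit (c : chain) (L : Type) (inj : forall n, ch_ob c n -> L) : Prop :=
  is_cocone c L inj /\
  forall (C : Type) (k : forall n, ch_ob c n -> C), is_cocone c C k ->
    exists u : L -> C, (forall n x, u (inj n x) = k n x) /\
      (forall u' : L -> C, (forall n x, u' (inj n x) = k n x) -> forall y, u' y = u y).

Definition map_chain (F : FData) (c : chain) : chain :=
  mkChain (fun n => F (ch_ob c n)) (fun n => fmap F (ch_map c n)).

Definition omega_cocont (F : FData) : Prop :=
  forall (c : chain) (L : Type) (inj : forall n, ch_ob c n -> L),
    is_colimit c L inj ->
    is_colimit (map_chain F c) (F L) (fun n => fmap F (inj n)).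

Definition IsCF (F : FData) : Prop := is_functor F /\ omega_cocont F.

Definition NTd (F G : FData) : Type := forall A : Type, F A -> G A.

Definition natural {F G : FData} (a : NTd F G) : Prop :=
  forall A B (f : A -> B) (x : F A), a B (fmap F f x) = fmap G f (a A x).

Definition NTid (F : FData) : NTd F F := fun A x => x.
Definition NTcomp {F G K : FData} (b : NTd G K) (a : NTd F G) : NTd F K :=
  fun A x => b A (a A x).
Definition whiskR {X X' : FData} (a : NTd X X') (Z : FData) : NTd (Fcomp X Z) (Fcomp X' Z) :=
  fun A => a (Z A).
Definition whiskL (X : FData) {Z Z' : FData} (f : NTd Z Z') : NTd (Fcomp X Z) (Fcomp X Z') :=
  fun A => fmap X (f A).
Definition hcomp {Z1 Z2 : FData} (e1 : NTd Fid Z1) (e2 : NTd Fid Z2) : NTd Fid (Fcomp Z1 Z2) :=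
  fun A a => e1 (Z2 A) (e2 A a).

Lemma natural_id (F : FData) : natural (NTid F).
Proof. intros A B f x. reflexivity. Qed.

Lemma natural_comp {F G K : FData} {a : NTd F G} {b : NTd G K} :
  natural a -> natural b -> natural (NTcomp b a).
Proof. intros na nb A B f x. unfold NTcomp. rewrite na. apply nb. Qed.

Lemma natural_whiskR {X X' : FData} {a : NTd X X'} (na : natural a) (Z : FData) :
  natural (whiskR a Z).
Proof. intros A B f x. unfold whiskR. apply na. Qed.

Lemma natural_whiskL {X : FData} (hX : is_functor X) {Z Z' : FData} {f : NTd Z Z'} :
  natural f -> natural (whiskL X f).
Proof.
  intros nf A B g x. unfold whiskL; simpl.
  destruct hX as [_ hc].
  rewrite <- !hc. f_equal. apply functional_extensionality. intro y. apply nf.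
Qed.

Lemma natural_hcomp {Z1 Z2 : FData} {e1 : NTd Fid Z1} {e2 : NTd Fid Z2} :
  natural e1 -> natural e2 -> natural (hcomp e1 e2).
Proof.
  intros n1 n2 A B f x. unfold hcomp; simpl.
  change (e1 (Z2 B) (e2 B (fmap Fid f x)) = fmap Z1 (fmap Z2 f) (e1 (Z2 A) (e2 A x))).
  rewrite (n2 A B f x). apply (n1 _ _ (fmap Z2 f) (e2 A x)).
Qed.

Lemma IsCF_id : IsCF Fid.
Proof.
  split. split; reflexivity.
  intros c L inj H. exact H.
Qed.

Lemma IsCF_comp {F G : FData} : IsCF F -> IsCF G -> IsCF (Fcomp F G).
Proof.
  intros [[F1 F2] cF] [[G1 G2] cG]. split. split.
  - intros A x; simpl.
    replace (fmap G (fun a : A => a)) with (fun y : G A => y).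
    + apply F1.
    + apply functional_extensionality; intro y; symmetry; apply G1.
  - intros A B C f g x; simpl.
    replace (fmap G (fun a => g (f a))) with (fun y => fmap G g (fmap G f y)).
    + apply F2.
    + apply functional_extensionality; intro y; symmetry; apply G2.
  - intros c L inj H.
    exact (cF _ _ _ (cG c L inj H)).
Qed.

(* ---------- restricting domains to End^omega(Set) ----------
   Functions defined only on omega-cocontinuous functors (resp. natural
   transformations) take a proof of that fact, squashed into SProp, so that
   the result only depends on the functor (resp. transformation) itself. *)

Inductive Squash (P : Prop) : SProp := squash : P -> Squash P.
Arguments squash {P} _.

Definition sq_comp {X Z : FData} (sx : Squash (IsCF X)) (sz : Squash (IsCF Z)) :
  Squash (IsCF (Fcomp X Z)) :=
  match sx with squash px => match sz with squash pz => squash (IsCF_comp px pz) end end.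

Record fchain : Type := mkFChain {
  fc_ob : nat -> FData;
  fc_map : forall n, NTd (fc_ob n) (fc_ob (S n)) }.

Record fchain_ok (c : fchain) : Prop := {
  fc_cf : forall n, IsCF (fc_ob c n);
  fc_nat : forall n, natural (fc_map c n) }.
Arguments fc_cf {c} _ n.
Arguments fc_nat {c} _ n.

Definition is_fcocone (c : fchain) (L : FData) (inj : forall n, NTd (fc_ob c n) L) : Prop :=
  (forall n, natural (inj n)) /\
  (forall n A x, inj (S n) A (fc_map c n A x) = inj n A x).

Definition is_fcolimit (c : fchain) (L : FData) (inj : forall n, NTd (fc_ob c n) L) : Prop :=
  IsCF L /\ is_fcocone c L inj /\
  forall (C : FData) (k : forall n, NTd (fc_ob c n) C), IsCF C -> is_fcocone c C k ->
    exists u : NTd L C, natural u /\ (forall n A x, u A (inj n A x) = k n A x) /\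
      (forall u' : NTd L C, natural u' -> (forall n A x, u' A (inj n A x) = k n A x) ->
         forall A y, u' A y = u A y).

Definition Hchain
  (Hob : forall X : FData, Squash (IsCF X) -> FData)
  (Hmap : forall (X : FData) (sx : Squash (IsCF X)) (Y : FData) (sy : Squash (IsCF Y))
            (a : NTd X Y), Squash (natural a) -> NTd (Hob X sx) (Hob Y sy))
  (c : fchain) (hc : fchain_ok c) : fchain :=
  mkFChain (fun n => Hob (fc_ob c n) (squash (fc_cf hc n)))
           (fun n => Hmap _ (squash (fc_cf hc n)) _ (squash (fc_cf hc (S n)))
                          (fc_map c n) (squash (fc_nat hc n))).

Record arity : Type := {
  Hob : forall X : FData, Squash (IsCF X) -> FData;
  Hmap : forall (X : FData) (sx : Squash (IsCF X)) (Y : FData) (sy : Squash (IsCF Y))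
           (a : NTd X Y), Squash (natural a) -> NTd (Hob X sx) (Hob Y sy);
  H_cf : forall X (px : IsCF X), IsCF (Hob X (squash px));
  H_nat : forall X (px : IsCF X) Y (py : IsCF Y) (a : NTd X Y) (na : natural a),
      natural (Hmap X (squash px) Y (squash py) a (squash na));
  H_id : forall X (px : IsCF X) A x,
      Hmap X (squash px) X (squash px) (NTid X) (squash (natural_id X)) A x = x;
  H_comp : forall X (px : IsCF X) Y (py : IsCF Y) Z (pz : IsCF Z)
      (a : NTd X Y) (b : NTd Y Z) (na : natural a) (nb : natural b) A x,
      Hmap X (squash px) Z (squash pz) (NTcomp b a) (squash (natural_comp na nb)) A x
      = Hmap Y (squash py) Z (squash pz) b (squash nb) A
          (Hmap X (squash px) Y (squash py) a (squash na) A x);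
  H_cocont : forall (c : fchain) (hc : fchain_ok c) (L : FData) (pL : IsCF L)
      (inj : forall n, NTd (fc_ob c n) L) (ninj : forall n, natural (inj n)),
      is_fcolimit c L inj ->
      is_fcolimit (Hchain Hob Hmap c hc) (Hob L (squash pL))
        (fun n => Hmap _ (squash (fc_cf hc n)) L (squash pL) (inj n) (squash (ninj n))) }.

Record sarity : Type := {
  sa_ar :> arity;
  theta : forall (X : FData) (sx : Squash (IsCF X)) (Z : FData) (sz : Squash (IsCF Z))
            (e : NTd Fid Z), Squash (natural e) ->
            NTd (Fcomp (Hob sa_ar X sx) Z) (Hob sa_ar (Fcomp X Z) (sq_comp sx sz));
  theta_nat : forall X (px : IsCF X) Z (pz : IsCF Z) (e : NTd Fid Z) (ne : natural e),
      natural (theta X (squash px) Z (squash pz) e (squash ne));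
  theta_natX : forall X (px : IsCF X) X' (px' : IsCF X') (a : NTd X X') (na : natural a)
      Z (pz : IsCF Z) (e : NTd Fid Z) (ne : natural e) A x,
      theta X' (squash px') Z (squash pz) e (squash ne) A
        (Hmap sa_ar X (squash px) X' (squash px') a (squash na) (Z A) x)
      = Hmap sa_ar (Fcomp X Z) (sq_comp (squash px) (squash pz))
                   (Fcomp X' Z) (sq_comp (squash px') (squash pz))
                   (whiskR a Z) (squash (natural_whiskR na Z)) A
          (theta X (squash px) Z (squash pz) e (squash ne) A x);
  theta_natZ : forall X (px : IsCF X) Z (pz : IsCF Z) (e : NTd Fid Z) (ne : natural e)
      Z' (pz' : IsCF Z') (e' : NTd Fid Z') (ne' : natural e')
      (f : NTd Z Z') (nf : natural f) (pf : forall A a, f A (e A a) = e' A a) A x,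
      theta X (squash px) Z' (squash pz') e' (squash ne') A
        (fmap (Hob sa_ar X (squash px)) (f A) x)
      = Hmap sa_ar (Fcomp X Z) (sq_comp (squash px) (squash pz))
                   (Fcomp X Z') (sq_comp (squash px) (squash pz'))
                   (whiskL X f) (squash (natural_whiskL (proj1 px) nf)) A
          (theta X (squash px) Z (squash pz) e (squash ne) A x);
  theta_id : forall X (px : IsCF X) A x,
      theta X (squash px) Fid (squash IsCF_id) (NTid Fid) (squash (natural_id Fid)) A x = x;
  theta_comp : forall X (px : IsCF X) Z1 (p1 : IsCF Z1) (e1 : NTd Fid Z1) (n1 : natural e1)
      Z2 (p2 : IsCF Z2) (e2 : NTd Fid Z2) (n2 : natural e2) A x,
      theta X (squash px) (Fcomp Z1 Z2) (sq_comp (squash p1) (squash p2))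
            (hcomp e1 e2) (squash (natural_hcomp n1 n2)) A x
      = theta (Fcomp X Z1) (sq_comp (squash px) (squash p1)) Z2 (squash p2) e2 (squash n2) A
          (theta X (squash px) Z1 (squash p1) e1 (squash n1) (Z2 A) x) }.

Record monad_w : Type := {
  mo : FData;
  mo_mu : NTd (Fcomp mo mo) mo;
  mo_eta : NTd Fid mo;
  mo_cf : IsCF mo;
  mo_mu_nat : natural mo_mu;
  mo_eta_nat : natural mo_eta;
  mo_assoc : forall A x, mo_mu A (mo_mu (mo A) x) = mo_mu A (fmap mo (mo_mu A) x);
  mo_unitl : forall A x, mo_mu A (mo_eta (mo A) x) = x;
  mo_unitr : forall A x, mo_mu A (fmap mo (mo_eta A) x) = x }.

Record is_module (R : monad_w) (M : FData) (rho : NTd (Fcomp M (mo R)) M) : Prop := {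
  ism_functor : is_functor M;
  ism_nat : natural rho;
  ism_assoc : forall A x, rho A (rho (mo R A) x) = rho A (fmap M (mo_mu R A) x);
  ism_unit : forall A x, rho A (fmap M (mo_eta R A) x) = x }.

Record module_w (R : monad_w) : Type := {
  md : FData;
  md_act : NTd (Fcomp md (mo R)) md;
  md_cf : IsCF md;
  md_mod : is_module R md md_act }.
Arguments md {R} _.
Arguments md_act {R} _.
Arguments md_cf {R} _.
Arguments md_mod {R} _.

Record monad_mor (R S : monad_w) (f : NTd (mo R) (mo S)) : Prop := {
  mmo_nat : natural f;
  mmo_mu : forall A x, f A (mo_mu R A x) = mo_mu S A (f (mo S A) (fmap (mo R) (f A) x));
  mmo_eta : forall A a, f A (mo_eta R A a) = mo_eta S A a }.

Definition pb_act (R S : monad_w) (f : NTd (mo R) (mo S)) (N : FData)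
  (rhoN : NTd (Fcomp N (mo S)) N) : NTd (Fcomp N (mo R)) N :=
  fun A x => rhoN A (fmap N (f A) x).

Record is_module_mor (R : monad_w) (M : FData) (rhoM : NTd (Fcomp M (mo R)) M)
  (N : FData) (rhoN : NTd (Fcomp N (mo R)) N) (m : NTd M N) : Prop := {
  imm_nat : natural m;
  imm_act : forall A x, m A (rhoM A x) = rhoN A (m (mo R A) x) }.

Record bmod_mor (R S : monad_w) (M : module_w R) (N : module_w S)
  (f : NTd (mo R) (mo S)) (m : NTd (md M) (md N)) : Prop := {
  bm_f : monad_mor R S f;
  bm_m : is_module_mor R (md M) (md_act M) (md N) (pb_act R S f (md N) (md_act N)) m }.

Definition HM (H : sarity) (R : monad_w) (M : module_w R) : FData :=
  Hob H (md M) (squash (md_cf M)).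

Definition HM_act (H : sarity) (R : monad_w) (M : module_w R) :
  NTd (Fcomp (HM H R M) (mo R)) (HM H R M) :=
  fun A x =>
    Hmap H (Fcomp (md M) (mo R)) (sq_comp (squash (md_cf M)) (squash (mo_cf R)))
           (md M) (squash (md_cf M))
           (md_act M) (squash (ism_nat _ _ _ (md_mod M))) A
      (theta H (md M) (squash (md_cf M)) (mo R) (squash (mo_cf R))
             (mo_eta R) (squash (mo_eta_nat R)) A x).

Definition Hmor (H : sarity) (R S : monad_w) (M : module_w R) (N : module_w S)
  (m : NTd (md M) (md N)) (nm : natural m) : NTd (HM H R M) (HM H S N) :=
  Hmap H (md M) (squash (md_cf M)) (md N) (squash (md_cf N)) m (squash nm).

Arguments imm_nat {R M rhoM N rhoN m} _ _ _ _ _.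
Arguments bm_m {R S M N f m} _.
Arguments bm_f {R S M N f m} _.

Definition bmod_mor_nat {R S : monad_w} {M : module_w R} {N : module_w S}
  {f : NTd (mo R) (mo S)} {m : NTd (md M) (md N)} (h : bmod_mor R S M N f m) : natural m :=
  imm_nat (bm_m h).

(* Every module law for H(M)
   is reduced, using the coherence laws of theta, to the image under H of the corresponding law
   for M: associativity goes through theta_{M,(R.R, eta.eta)}, which theta_comp splits into two
   copies of theta_{_,(R,eta)} and which naturality in the point along mu : (R.R, eta.eta) ->
   (R, eta) relates to theta_{M,(R,eta)}; the unit law uses naturality along eta : (I, 1) ->
   (R, eta) together with theta_id; compatibility with (f, m) uses naturality in X along m and
   in the point along f. *)
From Stdlib Require Import FunctionalExtensionality.

Section ArityMap.

Variable H : arity.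

Lemma Hmap_ext X sx Y sy (a b : NTd X Y) (na : Squash (natural a))
    (nb : Squash (natural b)) :
  (forall A x, a A x = b A x) ->
  forall A y, Hmap H X sx Y sy a na A y = Hmap H X sx Y sy b nb A y.
Proof.
  intros Eab.
  assert (a = b) as ->.
  { apply functional_extensionality_dep; intro A.
    apply functional_extensionality; intro x; apply Eab. }
  reflexivity.
Qed.

Lemma Hmap_fuse X (px : IsCF X) Y (py : IsCF Y) Z (pz : IsCF Z)
    (a : NTd X Y) (b : NTd Y Z) (c : NTd X Z)
    (na : natural a) (nb : natural b) (nc : natural c) :
  (forall A x, b A (a A x) = c A x) ->
  forall A x,
    Hmap H Y (squash py) Z (squash pz) b (squash nb) A
      (Hmap H X (squash px) Y (squash py) a (squash na) A x)
    = Hmap H X (squash px) Z (squash pz) c (squash nc) A x.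
Proof.
  intros Ebac A x.
  rewrite <- (H_comp H X px Y py Z pz a b na nb).
  apply Hmap_ext; exact Ebac.
Qed.

End ArityMap.

Section LiftedModule.

Variables (H : sarity) (R : monad_w) (M : module_w R).

Local Notation pM := (md_cf M).
Local Notation pR := (mo_cf R).
Local Notation nrho := (ism_nat _ _ _ (md_mod M)).
Lemma natural_HM_act : natural (HM_act H R M).
Proof.
  apply (natural_comp (F := Fcomp (HM H R M) (mo R))).
  - apply theta_nat.
  - apply H_nat.
Qed.

Lemma HM_act_assoc A x :
  HM_act H R M A (HM_act H R M (mo R A) x)
  = HM_act H R M A (fmap (HM H R M) (mo_mu R A) x).
Proof.
  unfold HM_act, HM.
  rewrite (theta_natX H _ (IsCF_comp pM pR) _ pM (md_act M) nrho _ pR _ (mo_eta_nat R)).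
  rewrite (Hmap_fuse H _ (IsCF_comp (IsCF_comp pM pR) pR) _ (IsCF_comp pM pR) _ pM
             _ _ (fun B y => md_act M B (md_act M (mo R B) y))
             (natural_whiskR nrho (mo R)) nrho (natural_comp (natural_whiskR nrho (mo R)) nrho))
    by reflexivity.
  rewrite <- (theta_comp H _ pM _ pR _ (mo_eta_nat R) _ pR _ (mo_eta_nat R)).
  assert (mu_point : forall B b, mo_mu R B (hcomp (mo_eta R) (mo_eta R) B b) = mo_eta R B b)
    by (intros; apply mo_unitl).
  rewrite (theta_natZ H _ pM _ (IsCF_comp pR pR) _
             (natural_hcomp (mo_eta_nat R) (mo_eta_nat R))
             _ pR _ (mo_eta_nat R) _ (mo_mu_nat R) mu_point).
  rewrite (Hmap_fuse H _ (IsCF_comp pM (IsCF_comp pR pR)) _ (IsCF_comp pM pR) _ pM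
             _ _ (fun B y => md_act M B (fmap (md M) (mo_mu R B) y))
             (natural_whiskL (proj1 pM) (mo_mu_nat R)) nrho
             (natural_comp (natural_whiskL (proj1 pM) (mo_mu_nat R)) nrho))
    by reflexivity.
  apply Hmap_ext; intros B y; apply (ism_assoc _ _ _ (md_mod M)).
Qed.

Lemma HM_act_unit A x :
  HM_act H R M A (fmap (HM H R M) (mo_eta R A) x) = x.
Proof.
  unfold HM_act, HM.
  assert (eta_point : forall B b, mo_eta R B (NTid Fid B b) = mo_eta R B b)
    by reflexivity.
  rewrite (theta_natZ H _ pM _ IsCF_id _ (natural_id Fid) _ pR _ (mo_eta_nat R)
             _ (mo_eta_nat R) eta_point).
  rewrite (theta_id H _ pM).
  rewrite (Hmap_fuse H _ (IsCF_comp pM IsCF_id) _ (IsCF_comp pM pR) _ pM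
             _ _ (NTid (md M)) (natural_whiskL (proj1 pM) (mo_eta_nat R)) nrho
             (natural_id (md M))).
  - apply (H_id H _ pM).
  - intros B y; apply (ism_unit _ _ _ (md_mod M)).
Qed.

Lemma HM_is_module : IsCF (HM H R M) /\ is_module R (HM H R M) (HM_act H R M).
Proof.
  pose proof (H_cf H _ pM) as HM_cf.
  split; [exact HM_cf | split].
  - exact (proj1 HM_cf).
  - exact natural_HM_act.
  - exact HM_act_assoc.
  - exact HM_act_unit.
Qed.

End LiftedModule.

Section LiftedMorphism.

Variables (H : sarity) (R S : monad_w) (M : module_w R) (N : module_w S).
Variables (f : NTd (mo R) (mo S)) (m : NTd (md M) (md N)).
Hypothesis hfm : bmod_mor R S M N f m.

Lemma Hmor_act A x :
  Hmor H R S M N m (bmod_mor_nat hfm) A (HM_act H R M A x)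
  = pb_act R S f (HM H S N) (HM_act H S N) A
      (Hmor H R S M N m (bmod_mor_nat hfm) (mo R A) x).
Proof.
  unfold HM_act, HM, Hmor, pb_act.
  pose proof (md_cf M) as pM; pose proof (mo_cf R) as pR.
  pose proof (md_cf N) as pN; pose proof (mo_cf S) as pS.
  pose proof (ism_nat _ _ _ (md_mod M)) as nrhoM.
  pose proof (ism_nat _ _ _ (md_mod N)) as nrhoN.
  pose proof (bmod_mor_nat hfm) as nm.
  pose proof (bm_f hfm) as hf.
  pose proof (natural_comp (natural_whiskR nm (mo R)) (natural_whiskL (proj1 pN) (mmo_nat _ _ _ hf)))
    as nmf.
  rewrite (Hmap_fuse H _ (IsCF_comp pM pR) _ pM _ pN _ _ (NTcomp m (md_act M))
             nrhoM nm (natural_comp nrhoM nm)) by reflexivity.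
  rewrite (theta_natZ H _ pN _ pR _ (mo_eta_nat R) _ pS _ (mo_eta_nat S)
             f (mmo_nat _ _ _ hf) (mmo_eta _ _ _ hf)).
  rewrite (theta_natX H _ pM _ pN m nm _ pR _ (mo_eta_nat R)).
  rewrite (Hmap_fuse H _ (IsCF_comp pM pR) _ (IsCF_comp pN pR) _ (IsCF_comp pN pS)
             _ _ _ (natural_whiskR nm (mo R)) (natural_whiskL (proj1 pN) (mmo_nat _ _ _ hf))
             nmf) by reflexivity.
  rewrite (Hmap_fuse H _ (IsCF_comp pM pR) _ (IsCF_comp pN pS) _ pN _ _ _ nmf nrhoN
             (natural_comp nmf nrhoN)) by reflexivity.
  apply Hmap_ext; intros B y; apply (imm_act _ _ _ _ _ _ (bm_m hfm)).
Qed.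

Lemma Hmor_is_module_mor :
  is_module_mor R (HM H R M) (HM_act H R M)
    (HM H S N) (pb_act R S f (HM H S N) (HM_act H S N))
    (Hmor H R S M N m (bmod_mor_nat hfm)).
Proof.
  split.
  - apply H_nat.
  - exact Hmor_act.
Qed.

End LiftedMorphism.

Theorem mainTheorem2 (H : sarity) :
  (forall (R : monad_w) (M : module_w R),
      IsCF (HM H R M) /\ is_module R (HM H R M) (HM_act H R M))
  /\
  (forall (R S : monad_w) (M : module_w R) (N : module_w S)
          (f : NTd (mo R) (mo S)) (m : NTd (md M) (md N)) (hfm : bmod_mor R S M N f m),
      monad_mor R S f /\
      is_module_mor R (HM H R M) (HM_act H R M)
        (HM H S N) (pb_act R S f (HM H S N) (HM_act H S N))
        (Hmor H R S M N m (bmod_mor_nat hfm)))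
  /\
  (forall (R : monad_w) (M : module_w R) A x,
      Hmor H R R M M (NTid (md M)) (natural_id (md M)) A x = x)
  /\
  (forall (R S T : monad_w) (M : module_w R) (N : module_w S) (P : module_w T)
          (f : NTd (mo R) (mo S)) (m : NTd (md M) (md N))
          (g : NTd (mo S) (mo T)) (n : NTd (md N) (md P))
          (hfm : bmod_mor R S M N f m) (hgn : bmod_mor S T N P g n) A x,
      Hmor H R T M P (NTcomp n m) (natural_comp (bmod_mor_nat hfm) (bmod_mor_nat hgn)) A x
      = Hmor H S T N P n (bmod_mor_nat hgn) A (Hmor H R S M N m (bmod_mor_nat hfm) A x)).
Proof.
  split; [| split; [| split]].
  - exact (HM_is_module H).
  - intros R S M N f m hfm.
    exact (conj (bm_f hfm) (Hmor_is_module_mor H R S M N f m hfm)).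
  - intros R M; exact (H_id H (md M) (md_cf M)).
  - intros R S T M N P f m g n hfm hgn.
    exact (H_comp H (md M) (md_cf M) (md N) (md_cf N) (md P) (md_cf P) _ _ _ _).
Qed.
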